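(* Let $\mathcal A$ be an abelian category and let $0\to F\xrightarrow{i} M\xrightarrow{d} C\to 0$ be a fully invariant short exact sequence in $\mathcal A$. (1) Assume that $M$ is (strongly) self-$F$-split, and let $N$ be a direct summand of $M$ with $F\subseteq N$. Then for every (fully invariant) direct summand $K$ of $M$, $K\cap N$ is a (fully invariant) direct summand of $M$. (2) Assume that $M$ is dual (strongly) self-$F$-split, and let $N$ be a direct summand of $M$ with $N\subseteq F$. Then for every (fully invariant) direct summand $K$ of $M$, $K+N$ is a (fully invariant) direct summand of $M$.
   Context: Convention: each statement containing parenthetical words holds in two versions: one obtained by deleting all parenthetical words and one obtained by keeping all of them. Let $\mathcal A$ be an abelian category. A morphism $s:X\to Y$ is a section if $ts=1_X$ for some $t$, and a retraction if $st=1_Y$ for some $t$. A monomorphism $i:K\to M$ is fully invariant if for every morphism $h:M\to M$ there is $\alpha:K\to K$ with $hi=i\alpha$; an epimorphism $d:M\to C$ is fully coinvariant if for every $h:M\to M$ there is $\beta:C\to C$ with $dh=\beta d$. A subobject is fully invariant if its inclusion is. A short exact sequence $0\to F\xrightarrow{i}N\xrightarrow{d}C\to 0$ is fully invariant if $i$ is fully invariant. A (fully invariant) direct summand is a subobject whose inclusion is a (fully invariant) section. For an object $M$ and a fully invariant short exact sequence $0\to F\xrightarrow{i}N\xrightarrow{d}C\to 0$: $N$ is (strongly) $M$-$F$-split if for every morphism $g:M\to N$, $\ker(dg)$ (equivalently the morphism $P\to M$ in the pullback of $i$ along $g$) is a (fully invariant) section; $N$ is dual (strongly) $M$-$F$-split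 if for every morphism $g:N\to M$, $\mathrm{coker}(gi)$ (equivalently the morphism $M\to Q$ in the pushout of $d$ along $g$) is a (fully coinvariant) retraction. Self-versions: take $M=N$. *)

From HB Require Import structures.
From mathcomp Require Import all_boot all_algebra.
Set Implicit Arguments. Unset Strict Implicit. Unset Printing Implicit Defensive.
Import GRing.Theory.
Local Open Scope ring_scope.

Record preadditive := PreAdditive {
  Ob : Type;
  Mor : Ob -> Ob -> zmodType;
  idm : forall X, Mor X X;
  comp : forall X Y Z, Mor Y Z -> Mor X Y -> Mor X Z;
  compA : forall X Y Z W (h : Mor Z W) (g : Mor Y Z) (f : Mor X Y),
      comp h (comp g f) = comp (comp h g) f;
  comp1m : forall X Y (f : Mor X Y), comp (idm Y) f = f;
  compm1 : forall X Y (f : Mor X Y), comp f (idm X) = f;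
  compDl : forall X Y Z (g g' : Mor Y Z) (f : Mor X Y),
      comp (g + g') f = comp g f + comp g' f;
  compDr : forall X Y Z (g : Mor Y Z) (f f' : Mor X Y),
      comp g (f + f') = comp g f + comp g f'
}.

Arguments idm {p} X.
Arguments comp {p X Y Z} g f.
Notation "g \oc f" := (comp g f) (at level 40, left associativity).

Section Defs.
Variable C : preadditive.
Local Notation Mor := (@Mor C).

Definition mono {X Y} (f : Mor X Y) : Prop :=
  forall W (g h : Mor W X), f \oc g = f \oc h -> g = h.
Definition epi {X Y} (f : Mor X Y) : Prop :=
  forall W (g h : Mor Y W), g \oc f = h \oc f -> g = h.

Definition is_kernel {A B K} (f : Mor A B) (k : Mor K A) : Prop :=
  f \oc k = 0 /\
  forall X (g : Mor X A), f \oc g = 0 ->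
    exists u : Mor X K, k \oc u = g /\ forall v, k \oc v = g -> v = u.
Definition is_cokernel {A B Q} (f : Mor A B) (c : Mor B Q) : Prop :=
  c \oc f = 0 /\
  forall X (g : Mor B X), g \oc f = 0 ->
    exists u : Mor Q X, u \oc c = g /\ forall v, v \oc c = g -> v = u.

Definition is_zero_object (Z : Ob C) : Prop :=
  forall X, (forall f : Mor X Z, f = 0) /\ (forall f : Mor Z X, f = 0).

Definition is_biproduct {A B P} (i1 : Mor A P) (i2 : Mor B P)
    (p1 : Mor P A) (p2 : Mor P B) : Prop :=
  p1 \oc i1 = idm A /\ p2 \oc i2 = idm B /\
  i1 \oc p1 + i2 \oc p2 = idm P.

Definition is_pullback {A B M P} (f : Mor A M) (g : Mor B M)
    (a : Mor P A) (b : Mor P B) : Prop :=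
  f \oc a = g \oc b /\
  forall X (x : Mor X A) (y : Mor X B), f \oc x = g \oc y ->
    exists u : Mor X P, (a \oc u = x /\ b \oc u = y) /\
      forall v, a \oc v = x -> b \oc v = y -> v = u.

Definition is_abelian : Prop :=
  (exists Z : Ob C, is_zero_object Z) /\
  (forall A B : Ob C, exists P (i1 : Mor A P) (i2 : Mor B P)
       (p1 : Mor P A) (p2 : Mor P B), is_biproduct i1 i2 p1 p2) /\
  (forall A B (f : Mor A B), exists K (k : Mor K A), is_kernel f k) /\
  (forall A B (f : Mor A B), exists Q (c : Mor B Q), is_cokernel f c) /\
  (forall A B (m : Mor A B), mono m -> exists Q (f : Mor B Q), is_kernel f m) /\
  (forall A B (e : Mor A B), epi e -> exists K (f : Mor K A), is_cokernel f e).

Definition section {X Y} (s : Mor X Y) : Prop :=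
  exists t : Mor Y X, t \oc s = idm X.
Definition retraction {X Y} (s : Mor X Y) : Prop :=
  exists t : Mor Y X, s \oc t = idm Y.

Definition fully_invariant {K M} (i : Mor K M) : Prop :=
  mono i /\ forall h : Mor M M, exists alpha : Mor K K, h \oc i = i \oc alpha.
Definition fully_coinvariant {M Cq} (d : Mor M Cq) : Prop :=
  epi d /\ forall h : Mor M M, exists beta : Mor Cq Cq, d \oc h = beta \oc d.

(* The two readings of the parenthetical convention:
   strong = false : words in parentheses deleted,
   strong = true  : words in parentheses kept. *)
Definition opt_fi_section (strong : bool) {X Y} (s : Mor X Y) : Prop :=
  section s /\ (strong -> fully_invariant s).
Definition opt_fc_retraction (strong : bool) {X Y} (s : Mor X Y) : Prop :=
  retraction s /\ (strong -> fully_coinvariant s).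

Definition short_exact {F N Cq} (i : Mor F N) (d : Mor N Cq) : Prop :=
  mono i /\ epi d /\ is_kernel d i.
Definition fully_invariant_ses {F N Cq} (i : Mor F N) (d : Mor N Cq) : Prop :=
  short_exact i d /\ fully_invariant i.

Definition MF_split (strong : bool) (M : Ob C) {F N Cq}
    (i : Mor F N) (d : Mor N Cq) : Prop :=
  forall (g : Mor M N) (Kr : Ob C) (k : Mor Kr M),
    is_kernel (d \oc g) k -> opt_fi_section strong k.
Definition dual_MF_split (strong : bool) (M : Ob C) {F N Cq}
    (i : Mor F N) (d : Mor N Cq) : Prop :=
  forall (g : Mor N M) (Q : Ob C) (c : Mor M Q),
    is_cokernel (g \oc i) c -> opt_fc_retraction strong c.

Definition self_F_split (strong : bool) {F M Cq}
    (i : Mor F M) (d : Mor M Cq) : Prop := MF_split strong M i d.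
Definition dual_self_F_split (strong : bool) {F M Cq}
    (i : Mor F M) (d : Mor M Cq) : Prop := dual_MF_split strong M i d.

End Defs.

(* Write pi_K = k t and pi_N = n n' for the idempotents of the summands K and N.
   (1) Let L be the kernel of d (1 - pi_N) pi_K, a (fully invariant) summand by
   self-F-splitness.  Since F <= N, the map (1 - pi_N) pi_K, which lands in a
   complement of N, vanishes on L; so pi_K maps L into K ∩ N, which it fixes
   and which lies in L.  Hence pi_K restricted to L retracts M onto K ∩ N, and
   K ∩ N = K ∩ L is fully invariant when K and L are.
   (2) Let c be the cokernel of (1 - pi_K) pi_N i.  As N <= F, the image of that
   map is X = (1 - pi_K) N, so dual splitness makes X a summand with projection
   1 - r c (where c r = 1), and pi_K + (1 - r c)(1 - pi_K) is an idempotent with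
   image K + N = K + X; it factors through the image s of [k n], splitting s.
   Full invariance of K + N follows from that of K and the full coinvariance of c. *)

From Pilot Require Import Defs.
From mathcomp Require Import all_boot all_algebra.
Import GRing.Theory.
Local Open Scope ring_scope.

Section Preadditive.
Context {C : preadditive}.

Lemma comp0l (X Y Z : Ob C) (f : Mor X Y) : (0 : Mor Y Z) \oc f = 0.
Proof.
have H := compDl (0 : Mor Y Z) 0 f; rewrite addr0 in H.
by apply: (addrI (0 \oc f)); rewrite -H addr0.
Qed.

Lemma comp0r (X Y Z : Ob C) (g : Mor Y Z) : g \oc (0 : Mor X Y) = 0.
Proof.
have H := compDr g (0 : Mor X Y) 0; rewrite addr0 in H.
by apply: (addrI (g \oc 0)); rewrite -H addr0.
Qed.

Lemma compNl (X Y Z : Ob C) (g : Mor Y Z) (f : Mor X Y) :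
  (- g) \oc f = - (g \oc f).
Proof. by apply/eqP; rewrite -addr_eq0 -compDl addNr comp0l. Qed.

Lemma compNr (X Y Z : Ob C) (g : Mor Y Z) (f : Mor X Y) :
  g \oc (- f) = - (g \oc f).
Proof. by apply/eqP; rewrite -addr_eq0 -compDr addNr comp0r. Qed.

Lemma compBl (X Y Z : Ob C) (g g' : Mor Y Z) (f : Mor X Y) :
  (g - g') \oc f = g \oc f - g' \oc f.
Proof. by rewrite compDl compNl. Qed.

Lemma compBr (X Y Z : Ob C) (g : Mor Y Z) (f f' : Mor X Y) :
  g \oc (f - f') = g \oc f - g \oc f'.
Proof. by rewrite compDr compNr. Qed.

Lemma compK {X Y : Ob C} {r : Mor Y X} {s : Mor X Y} :
  r \oc s = idm X -> forall V (h : Mor V X), r \oc (s \oc h) = h.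
Proof. by move=> rs V h; rewrite Defs.compA rs comp1m. Qed.

Lemma section_mono {X Y : Ob C} {s : Mor X Y} : section s -> mono s.
Proof.
move=> [r rs] W g h sgh.
by rewrite -(comp1m g) -(comp1m h) -rs -!Defs.compA sgh.
Qed.

Lemma compl_proj_comp {X Y : Ob C} {s : Mor X Y} {r : Mor Y X} :
  r \oc s = idm X -> (idm Y - s \oc r) \oc s = 0.
Proof. by move=> rs; rewrite compBl comp1m -Defs.compA rs compm1 subrr. Qed.

Lemma compl_proj_idem {X Y : Ob C} {s : Mor X Y} {r : Mor Y X} :
  r \oc s = idm X -> (idm Y - s \oc r) \oc (idm Y - s \oc r) = idm Y - s \oc r.
Proof.
by move=> rs; rewrite compBr compm1 Defs.compA (compl_proj_comp rs) comp0l subr0.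
Qed.

Lemma compl_proj_eq0 {X Y W : Ob C} {s : Mor X Y} {r : Mor Y X}
    {y : Mor W Y} {z : Mor W X} :
  r \oc s = idm X -> (idm Y - s \oc r) \oc y = s \oc z ->
  (idm Y - s \oc r) \oc y = 0.
Proof.
move=> rs yz; rewrite -(compl_proj_idem rs) -Defs.compA yz Defs.compA.
by rewrite (compl_proj_comp rs) comp0l.
Qed.

Lemma kernel_lift {A B K X : Ob C} {f : Mor A B} {k : Mor K A} {g : Mor X A} :
  is_kernel f k -> f \oc g = 0 -> exists u, k \oc u = g.
Proof. by move=> [_ kerk] /kerk [u [ku _]]; exists u. Qed.

Lemma cokernel_desc {A B Q X : Ob C} {f : Mor A B} {c : Mor B Q} {g : Mor B X} :
  is_cokernel f c -> g \oc f = 0 -> exists u, u \oc c = g.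
Proof. by move=> [_ cokc] /cokc [u [uc _]]; exists u. Qed.

Lemma cokernel_compl_proj_eq0 {A B Q X : Ob C} {f : Mor A B} {c : Mor B Q}
    {r : Mor Q B} {g : Mor B X} :
  is_cokernel f c -> c \oc r = idm Q -> g \oc f = 0 -> g \oc (idm B - r \oc c) = 0.
Proof.
move=> cok_c cr /(cokernel_desc cok_c) [w <-].
by rewrite compBr compm1 -Defs.compA (Defs.compA c) cr comp1m subrr.
Qed.

Lemma pullback_mono {A B M P : Ob C} {f : Mor A M} {g : Mor B M}
    {a : Mor P A} {b : Mor P B} :
  is_pullback f g a b -> mono g -> mono a.
Proof.
move=> [fagb univ] g_mono W v w avw.
have gbvw : g \oc (b \oc v) = g \oc (b \oc w).
  by rewrite !Defs.compA -fagb -!Defs.compA avw.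
have fav : f \oc (a \oc v) = g \oc (b \oc v) by rewrite !Defs.compA fagb.
have [u [_ uniq]] := univ _ _ _ fav.
by rewrite (uniq v) // (uniq w) -?avw -?(g_mono _ _ _ gbvw).
Qed.

End Preadditive.

Section MeetWithSummand.
Context {C : preadditive} {F M Cq N K P : Ob C}.
Context {i : Mor F M} {d : Mor M Cq} {n : Mor N M} {n' : Mor M N}
  {u : Mor F N} {k : Mor K M} {t : Mor M K} {a : Mor P K} {b : Mor P N}.
Hypotheses (ker_d : is_kernel d i) (n'n : n' \oc n = idm N) (nu : n \oc u = i)
  (tk : t \oc k = idm K) (pb : is_pullback k n a b).

Local Notation g := ((idm M - n \oc n') \oc (k \oc t)).

Lemma proj_ker_dg_in_summand {X : Ob C} {x : Mor X M} :
  (d \oc g) \oc x = 0 -> k \oc (t \oc x) = n \oc (n' \oc (k \oc (t \oc x))).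
Proof.
rewrite -Defs.compA => /(kernel_lift ker_d) [w iw].
have : (idm M - n \oc n') \oc (k \oc (t \oc x)) = n \oc (u \oc w).
  by rewrite (Defs.compA k) Defs.compA -iw Defs.compA nu.
move=> /(compl_proj_eq0 n'n) /eqP.
by rewrite compBl comp1m subr_eq0 -Defs.compA => /eqP.
Qed.

Lemma meet_in_ker_dg : (d \oc g) \oc (k \oc a) = 0.
Proof.
have [kanb _] := pb.
rewrite -!Defs.compA (compK tk) kanb (Defs.compA _ n).
by rewrite (compl_proj_comp n'n) comp0l comp0r.
Qed.

Lemma meet_section {L : Ob C} {l : Mor L M} :
  is_kernel (d \oc g) l -> section l -> section (k \oc a).
Proof.
move=> ker_l [rl rll].
have [z lz] := kernel_lift ker_l meet_in_ker_dg.
have dg_lrl : (d \oc g) \oc (l \oc rl) = 0 by rewrite Defs.compA ker_l.1 comp0l.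
have [r [[ar _] _]] := pb.2 _ _ _ (proj_ker_dg_in_summand dg_lrl).
exists r; apply: (pullback_mono pb (section_mono (ex_intro _ n' n'n))).
by rewrite compm1 Defs.compA ar -lz -!Defs.compA (compK rll) lz (compK tk).
Qed.

Lemma meet_fully_invariant {L : Ob C} {l : Mor L M} :
  is_kernel (d \oc g) l -> fully_invariant l -> fully_invariant k ->
  mono (k \oc a) -> fully_invariant (k \oc a).
Proof.
move=> ker_l [_ l_fi] [_ k_fi] ka_mono; split=> // h.
have [z lz] := kernel_lift ker_l meet_in_ker_dg.
have [be hk] := k_fi h; have [ga hl] := l_fi h.
have dg_hka : (d \oc g) \oc (h \oc (k \oc a)) = 0.
  rewrite -lz (Defs.compA h) hl (Defs.compA (d \oc _) (l \oc ga)).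
  by rewrite (Defs.compA (d \oc _) l) ker_l.1 !comp0l.
have tkh : k \oc (t \oc (h \oc (k \oc a))) = h \oc (k \oc a).
  by rewrite (Defs.compA h) hk -Defs.compA (compK tk).
have := proj_ker_dg_in_summand dg_hka; rewrite {2}tkh => hka_in_n.
have [al [[aal _] _]] := pb.2 _ _ _ hka_in_n.
by exists al; rewrite -Defs.compA aal tkh.
Qed.

Lemma meet_opt_fi_section {strong : bool} {L : Ob C} {l : Mor L M} :
  is_kernel (d \oc g) l -> opt_fi_section strong l ->
  opt_fi_section strong k -> opt_fi_section strong (k \oc a).
Proof.
move=> ker_l [l_sec l_fi] [_ k_fi].
have ka_sec := meet_section ker_l l_sec.
split=> // /[dup] /l_fi lfi /k_fi kfi.
exact: meet_fully_invariant ker_l lfi kfi (section_mono ka_sec).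
Qed.

End MeetWithSummand.

Section ImageOfSum.
Context {C : preadditive} {M K N P S : Ob C}.
Context {k : Mor K M} {n : Mor N M} {i1 : Mor K P} {i2 : Mor N P}
  {p1 : Mor P K} {p2 : Mor P N} {e : Mor P S} {s : Mor S M}.
Hypotheses (bip : is_biproduct i1 i2 p1 p2) (e_epi : epi e)
  (im : k \oc p1 + n \oc p2 = s \oc e).

Lemma biproduct_p2i1 : p2 \oc i1 = 0.
Proof.
have [p1i1 [p2i2 sum]] := bip.
have := congr1 (fun z => p2 \oc (z \oc i1)) sum.
rewrite /= comp1m compDl compDr -!Defs.compA p1i1 compm1 (compK p2i2).
by move/eqP; rewrite -subr_eq0 addrK => /eqP.
Qed.

Lemma biproduct_p1i2 : p1 \oc i2 = 0.
Proof.
have [p1i1 [p2i2 sum]] := bip.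
have := congr1 (fun z => p1 \oc (z \oc i2)) sum.
rewrite /= comp1m compDl compDr -!Defs.compA p2i2 compm1 (compK p1i1).
by move/eqP; rewrite -subr_eq0 addrK => /eqP.
Qed.

Lemma image_comp_inl : s \oc (e \oc i1) = k.
Proof.
have [p1i1 _] := bip.
by rewrite Defs.compA -im compDl -!Defs.compA p1i1 biproduct_p2i1 compm1 comp0r addr0.
Qed.

Lemma image_comp_inr : s \oc (e \oc i2) = n.
Proof.
have [_ [p2i2 _]] := bip.
by rewrite Defs.compA -im compDl -!Defs.compA p2i2 biproduct_p1i2 compm1 comp0r add0r.
Qed.

Lemma image_comp_eq0 {X : Ob C} (f : Mor M X) :
  f \oc s = 0 <-> f \oc k = 0 /\ f \oc n = 0.
Proof.
split=> [fs0 | [fk0 fn0]].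
  by rewrite -image_comp_inl -image_comp_inr !Defs.compA fs0 !comp0l.
apply: e_epi; rewrite comp0l -Defs.compA -im compDr !Defs.compA fk0 fn0.
by rewrite !comp0l addr0.
Qed.

End ImageOfSum.

Section SumWithSummand.
Context {C : preadditive} {F M N K P S Z Q : Ob C}.
Context {i : Mor F M} {n : Mor N M} {n' : Mor M N} {u : Mor N F}
  {k : Mor K M} {t : Mor M K} {i1 : Mor K P} {i2 : Mor N P}
  {p1 : Mor P K} {p2 : Mor P N} {e : Mor P S} {s : Mor S M}
  {q : Mor M Z} {c : Mor M Q}.
Hypotheses (n'n : n' \oc n = idm N) (iu : i \oc u = n) (tk : t \oc k = idm K)
  (bip : is_biproduct i1 i2 p1 p2) (e_epi : epi e) (s_mono : mono s)
  (im : k \oc p1 + n \oc p2 = s \oc e) (ker_q : is_kernel q s).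

Local Notation g := ((idm M - k \oc t) \oc (n \oc n')).

Hypothesis cok_c : is_cokernel (g \oc i) c.

Lemma g_comp_summand : g \oc (i \oc u) = (idm M - k \oc t) \oc n.
Proof. by rewrite iu -!Defs.compA n'n compm1. Qed.

Lemma summand_decomp : n = k \oc (t \oc n) + g \oc (i \oc u).
Proof. by rewrite g_comp_summand compBl comp1m Defs.compA addrC subrK. Qed.

Lemma cokernel_comp_summand : c \oc (g \oc (i \oc u)) = 0.
Proof. by rewrite (Defs.compA g) Defs.compA cok_c.1 comp0l. Qed.

Lemma q_summands_eq0 : q \oc k = 0 /\ q \oc n = 0.
Proof. exact/(image_comp_eq0 bip e_epi im)/ker_q.1. Qed.

Lemma q_g_i_eq0 : q \oc (g \oc i) = 0.
Proof.
have [qk qn] := q_summands_eq0.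
by rewrite !Defs.compA compBr compm1 Defs.compA qk comp0l subr0 qn !comp0l.
Qed.

Local Notation pi r := (k \oc t + (idm M - r \oc c) \oc (idm M - k \oc t)).

Lemma pi_summand_l (r : Mor Q M) : pi r \oc k = k.
Proof.
by rewrite compDl -!Defs.compA tk compm1 (compl_proj_comp tk) !comp0r addr0.
Qed.

Lemma pi_summand_r (r : Mor Q M) : pi r \oc n = n.
Proof.
rewrite compDl -(Defs.compA (idm M - r \oc c)) -g_comp_summand compBl comp1m.
rewrite -(Defs.compA r c) cokernel_comp_summand comp0r subr0 -(Defs.compA k t n).
exact/esym/summand_decomp.
Qed.

Lemma q_pi_eq0 (r : Mor Q M) : c \oc r = idm Q -> q \oc pi r = 0.
Proof.
move=> cr; have [qk _] := q_summands_eq0.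
rewrite compDr !Defs.compA qk comp0l add0r.
by rewrite (cokernel_compl_proj_eq0 cok_c cr q_g_i_eq0) comp0l.
Qed.

Lemma sum_section : retraction c -> section s.
Proof.
move=> [r /q_pi_eq0 /(kernel_lift ker_q) [rho srho]].
have pis : pi r \oc s = s.
  apply/eqP; rewrite -subr_eq0 -{2}(comp1m s) -compBl; apply/eqP.
  apply/(image_comp_eq0 bip e_epi im).
  by rewrite !(compBl _ _ _ (pi r)) !comp1m pi_summand_l pi_summand_r !subrr.
by exists rho; apply: s_mono; rewrite Defs.compA srho pis compm1.
Qed.

Lemma sum_fully_invariant :
  fully_coinvariant c -> fully_invariant k -> fully_invariant s.
Proof.
move=> [_ c_fc] [_ k_fi]; split=> // h.
have [qk _] := q_summands_eq0.
have [w wc] := cokernel_desc cok_c q_g_i_eq0.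
have [be cbe] := c_fc h; have [bk hk] := k_fi h.
have qhk : (q \oc h) \oc k = 0.
  by rewrite -Defs.compA hk Defs.compA qk comp0l.
have qhn : (q \oc h) \oc n = 0.
  rewrite summand_decomp compDr (Defs.compA (q \oc h) k) qhk comp0l add0r -wc.
  rewrite -(Defs.compA w c) -(Defs.compA w) cbe -(Defs.compA be).
  by rewrite cokernel_comp_summand !comp0r.
have := (image_comp_eq0 bip e_epi im _).2 (conj qhk qhn).
rewrite -Defs.compA => /(kernel_lift ker_q) [al sal].
by exists al.
Qed.

Lemma sum_opt_fi_section {strong : bool} :
  opt_fc_retraction strong c -> opt_fi_section strong k ->
  opt_fi_section strong s.
Proof.
move=> [c_retr c_fc] [_ k_fi].
split; first exact: sum_section c_retr.
by move=> /[dup] /c_fc cfc /k_fi kfi; apply: sum_fully_invariant.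
Qed.

End SumWithSummand.

Theorem proposition3p6 (C : preadditive) (HC : is_abelian C) (strong : bool)
    (F M Cq : Ob C) (i : Mor F M) (d : Mor M Cq)
    (Hses : fully_invariant_ses i d) :
  (* (1) *)
  (self_F_split strong i d ->
   forall (N : Ob C) (n : Mor N M), section n ->
   (exists u : Mor F N, n \oc u = i) ->
   forall (K : Ob C) (k : Mor K M), opt_fi_section strong k ->
   forall (P : Ob C) (a : Mor P K) (b : Mor P N), is_pullback k n a b ->
   opt_fi_section strong (k \oc a))
  /\
  (* (2) *)
  (dual_self_F_split strong i d ->
   forall (N : Ob C) (n : Mor N M), section n ->
   (exists u : Mor N F, i \oc u = n) ->
   forall (K : Ob C) (k : Mor K M), opt_fi_section strong k ->
   forall (P : Ob C) (i1 : Mor K P) (i2 : Mor N P) (p1 : Mor P K) (p2 : Mor P N),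
     is_biproduct i1 i2 p1 p2 ->
   forall (S : Ob C) (e : Mor P S) (s : Mor S M),
     epi e -> mono s -> k \oc p1 + n \oc p2 = s \oc e ->
   opt_fi_section strong s).
Proof.
have [_ [_ [kernels [cokernels [mono_kernel _]]]]] := HC.
have [[_ [_ ker_d]] _] := Hses.
split.
- move=> split_i N n [n' n'n] [u nu] K k k_sec P a b pb.
  have [[t tk] _] := k_sec.
  have [L [l ker_l]] := kernels _ _ (d \oc ((idm M - n \oc n') \oc (k \oc t))).
  exact (meet_opt_fi_section ker_d n'n nu tk pb ker_l
           (split_i _ _ _ ker_l) k_sec).
- move=> split_i N n [n' n'n] [u iu] K k k_sec P i1 i2 p1 p2 bip S e s e_epi s_mono im.
  have [[t tk] _] := k_sec.
  have [Z [q ker_q]] := mono_kernel _ _ s s_mono.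
  have [Q [c cok_c]] := cokernels _ _ (((idm M - k \oc t) \oc (n \oc n')) \oc i).
  exact (sum_opt_fi_section n'n iu tk bip e_epi s_mono im ker_q cok_c
           (split_i _ _ _ cok_c) k_sec).
Qed.
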